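(* Consider the CT–DT interconnected system of the context and let Assumptions (A1), (A2), (A3) hold with norms $\|\cdot\|_{\mathcal X}$, $\|\cdot\|_{\mathcal Z}$. Let $\xi\in\mathbb R$ with $\xi\ge\mathsf{osLip}_x(f)$ and let $\zeta>0$ be such that $\mathsf{osLip}\big(x\mapsto f(x,z^*(x))\big)\le-\zeta$, where $z^*(x)$ is the unique fixed point of $z\mapsto\mathsf G(x,z)$. Define $$C_1:=\frac{\mathsf{Lip}_z(f)\mathsf{Lip}_x(\mathsf G)}{1-\mathsf{Lip}_z(\mathsf G)}\Big(\mathsf{Lip}_x(f)+\frac{\mathsf{Lip}_z(f)\mathsf{Lip}_x(\mathsf G)}{1-\mathsf{Lip}_z(\mathsf G)}\Big),\qquad C_2(n):=[\mathsf{Lip}_z(\mathsf G)]^n\frac{\mathsf{Lip}_x(\mathsf G)\mathsf{Lip}_z(f)}{1-\mathsf{Lip}_z(\mathsf G)},$$ and $$T(n):=\begin{cases}\dfrac1\xi\log\Big(\dfrac{\xi(1-[\mathsf{Lip}_z(\mathsf G)]^n)}{C_2(n)+C_1/\zeta}+1\Big),&\xi\ne0,\\[2ex]\dfrac{1-[\mathsf{Lip}_z(\mathsf G)]^n}{C_2(n)+C_1/\zeta},&\xi=0,\end{cases}$$ (for $\xi<0$ such that the argument of the logarithm is $\le 0$, interpret $T(n)=+\infty$). Then for every $n\in\mathbb Z_{>0}$, $T(n)>0$, and for every $T$ with $0<T<T(n)$ the origin is globally exponentially stable for the interconnected system: there exist $\eta\in\mathbb R^2_{>0}$, $\varrho>0$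 and $\alpha>0$ such that every solution satisfies $$\big\|(\|x(t)\|_{\mathcal X},\|z(t)\|_{\mathcal Z})\big\|_{2,[\eta]}\le\varrho e^{-\alpha t}\big\|(\|x(0)\|_{\mathcal X},\|z(0)\|_{\mathcal Z})\big\|_{2,[\eta]}\quad\forall t\ge0,$$ where $\|(v_1,v_2)\|_{2,[\eta]}:=\sqrt{\eta_1v_1^2+\eta_2v_2^2}$.
   Context: Setup. Let $\|\cdot\|_{\mathcal X}$ be a norm on $\mathbb R^{n_x}$ and $\|\cdot\|_{\mathcal Z}$ a norm on $\mathbb R^{n_z}$; $\mathcal X\subseteq\mathbb R^{n_x}$, $\mathcal Z\subseteq\mathbb R^{n_z}$ convex. $f:\mathcal X\times\mathcal Z\to\mathbb R^{n_x}$ and $\mathsf G:\mathcal X\times\mathcal Z\to\mathcal Z$ continuous, $\mathsf G^1=\mathsf G$, $\mathsf G^{m+1}(x,z)=\mathsf G(x,\mathsf G^m(x,z))$. For $T>0$, $n\in\mathbb Z_{>0}$ the interconnected system is $\dot x(t)=f(x(t),z(t))$, $z_k=\mathsf G^n(x(kT),z_{k-1})$, $z(t)=z_k$ for $t\in[kT,(k+1)T)$, with $\mathcal X\times\mathcal Z$ forward invariant; $f(0,0)=0$, $\mathsf G(0,0)=0$ (so $z^*(0)=0$). Lipschitz notions: $\mathsf{Lip}_z(f):=\sup_x\sup_{z_1\ne z_2}\|f(x,z_1)-f(x,z_2)\|_{\mathcal X}/\|z_1-z_2\|_{\mathcal Z}$, and $\mathsf{Lip}_x(f),\mathsf{Lip}_x(\mathsf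 G),\mathsf{Lip}_z(\mathsf G)$ analogously. $\llbracket\cdot;\cdot\rrbracket$ is a weak pairing on $\mathbb R^{n_x}$ compatible with $\|\cdot\|_{\mathcal X}$; $\mathsf{osLip}_x(f):=\sup_z\sup_{x_1\ne x_2}\llbracket f(x_1,z)-f(x_2,z);x_1-x_2\rrbracket/\|x_1-x_2\|_{\mathcal X}^2$; for $F:\mathcal X\to\mathbb R^{n_x}$, $\mathsf{osLip}(F):=\sup_{x_1\ne x_2}\llbracket F(x_1)-F(x_2);x_1-x_2\rrbracket/\|x_1-x_2\|^2_{\mathcal X}$. Assumptions: (A1) $\mathsf{Lip}_x(f)<\infty$; (A2) $\mathsf{Lip}_z(f)\in(0,\infty)$ and $\mathsf{Lip}_x(\mathsf G)\in(0,\infty)$; (A3) $\mathsf{Lip}_z(\mathsf G)<1$. *)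

From HB Require Import structures.
From mathcomp Require Import all_boot all_order all_algebra.
From mathcomp Require Import all_classical all_reals all_analysis.
Set Implicit Arguments. Unset Strict Implicit. Unset Printing Implicit Defensive.
Import Order.TTheory GRing.Theory Num.Theory.
Import numFieldNormedType.Exports.
Local Open Scope classical_set_scope.
Local Open Scope ring_scope.

Section Defs.
Variable R : realType.

Definition is_norm (V : lmodType R) (N : V -> R) : Prop :=
  [/\ forall x, N x = 0 -> x = 0,
      forall (a : R) x, N (a *: x) = `|a| * N x &
      forall x y, N (x + y) <= N x + N y].

Definition is_weak_pairing (n : nat) (wp : 'rV[R]_n -> 'rV[R]_n -> R) : Prop :=
  [/\ forall x1 x2 y, wp (x1 + x2) y <= wp x1 y + wp x2 y,
      forall y, continuous (fun x => wp x y),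
      (forall (a : R) x y, 0 <= a -> wp (a *: x) y = a * wp x y /\ wp x (a *: y) = a * wp x y)
        /\ (forall x y, wp (- x) (- y) = wp x y),
      forall x, x != 0 -> 0 < wp x x &
      forall x y, `|wp x y| <= Num.sqrt (wp x x) * Num.sqrt (wp y y)].

Definition wp_compatible (n : nat) (wp : 'rV[R]_n -> 'rV[R]_n -> R) (N : 'rV[R]_n -> R) :=
  forall x, wp x x = N x ^+ 2.

Definition Lip_snd (A : Type) (B C : zmodType) (SA : set A) (SB : set B)
  (NB : B -> R) (NC : C -> R) (F : A -> B -> C) : \bar R :=
  ereal_sup [set r | exists a z1 z2, [/\ SA a, SB z1, SB z2, z1 != z2 &
      r = (NC (F a z1 - F a z2) / NB (z1 - z2))%:E]].

Definition Lip_fst (A : zmodType) (B : Type) (C : zmodType) (SA : set A) (SB : set B)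
  (NA : A -> R) (NC : C -> R) (F : A -> B -> C) : \bar R :=
  ereal_sup [set r | exists b x1 x2, [/\ SB b, SA x1, SA x2, x1 != x2 &
      r = (NC (F x1 b - F x2 b) / NA (x1 - x2))%:E]].

Definition osLip_fst (nx : nat) (B : Type) (SA : set 'rV[R]_nx) (SB : set B)
  (wp : 'rV[R]_nx -> 'rV[R]_nx -> R) (N : 'rV[R]_nx -> R)
  (F : 'rV[R]_nx -> B -> 'rV[R]_nx) : \bar R :=
  ereal_sup [set r | exists b x1 x2, [/\ SB b, SA x1, SA x2, x1 != x2 &
      r = (wp (F x1 b - F x2 b) (x1 - x2) / N (x1 - x2) ^+ 2)%:E]].

Definition osLip (nx : nat) (SA : set 'rV[R]_nx)
  (wp : 'rV[R]_nx -> 'rV[R]_nx -> R) (N : 'rV[R]_nx -> R)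
  (F : 'rV[R]_nx -> 'rV[R]_nx) : \bar R :=
  ereal_sup [set r | exists x1 x2, [/\ SA x1, SA x2, x1 != x2 &
      r = (wp (F x1 - F x2) (x1 - x2) / N (x1 - x2) ^+ 2)%:E]].

Definition Giter (A B : Type) (G : A -> B -> B) (n : nat) (x : A) (z : B) : B :=
  iter n (G x) z.

(* A solution of the CT-DT interconnection with sampling period T and n iterations:
   x : R -> R^nx (relevant on t >= 0); zs 0 = z_{-1} (initial DT state) and
   zs k.+1 = z_k, so that z(t) = zs k.+1 for t in [kT, (k+1)T). *)
Definition is_solution (nx nz : nat) (X : set 'rV[R]_nx) (Z : set 'rV[R]_nz)
  (f : 'rV[R]_nx -> 'rV[R]_nz -> 'rV[R]_nx) (G : 'rV[R]_nx -> 'rV[R]_nz -> 'rV[R]_nz)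
  (n : nat) (T : R) (x : R -> 'rV[R]_nx) (zs : nat -> 'rV[R]_nz) : Prop :=
  [/\ forall t, 0 <= t -> X (x t),
      forall k, Z (zs k),
      forall k : nat, zs k.+1 = Giter G n (x (k%:R * T)) (zs k),
      {within `[0, +oo[, continuous x} &
      forall (k : nat) (t : R), k%:R * T < t < k.+1%:R * T ->
        is_derive t 1 x (f (x t) (zs k.+1))].

Definition wnorm2 (eta1 eta2 v1 v2 : R) : R := Num.sqrt (eta1 * v1 ^+ 2 + eta2 * v2 ^+ 2).

Definition Tbound (LzG LxG Lzf Lxf xi zeta : R) (n : nat) : \bar R :=
  let K := Lzf * LxG / (1 - LzG) in
  let C1 := K * (Lxf + K) in
  let C2 := LzG ^+ n * (LxG * Lzf / (1 - LzG)) in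
  let D := C2 + C1 / zeta in
  if xi == 0 then ((1 - LzG ^+ n) / D)%:E
  else let arg := xi * (1 - LzG ^+ n) / D + 1 in
       if arg <= 0 then +oo%E else (ln arg / xi)%:E.

End Defs.

(* On each sampling interval the input z is frozen at z_k. Comparing the norm of
   the continuous state with scalar linear ODEs, through the one-sided Lipschitz
   bounds and a Dini-derivative comparison principle, bounds both |x(t)| and the
   drift |x(t) - x(kT)|; meanwhile the n contraction steps of G shrink the gap
   |z_k - z*(x(kT))| by L^n. The sampled pair (|x(kT)|, gap) therefore obeys a
   nonnegative 2x2 linear recursion, and T < T(n) is exactly the condition making
   it contractive: a weighted sum decays geometrically, which interpolates to an
   exponential bound at all times. *)

From HB Require Import structures.
From mathcomp Require Import all_boot all_order all_algebra.
From mathcomp Require Import all_classical all_reals all_analysis.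
From mathcomp Require Import ring lra.
Import Order.TTheory GRing.Theory Num.Theory.
Import numFieldNormedType.Exports.
Local Open Scope classical_set_scope.
Local Open Scope ring_scope.

Set Implicit Arguments. Unset Strict Implicit.

Section Comparison.
Variable R : realType.
Implicit Types (D g : R -> R) (t s lam mu : R).

Lemma within_continuous_ball (V : normedModType R) (A : set R) (f : R -> V) x :
  {within A, continuous f} -> A x -> forall e, 0 < e ->
  exists2 d, 0 < d & forall y, A y -> `|y - x| < d -> `|f y - f x| < e.
Proof.
move=> /subspace_continuousP /(_ x) fc Ax e e0.
move/cvgrPdist_lt : (fc Ax) => /(_ e e0).
rewrite /within nearE /= => /nbhs_ballP [d /= d0 H].
exists d => // y Ay yx; rewrite distrC; apply: H => //.
by rewrite /ball /= distrC.
Qed.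

Lemma itv_continuous_sign D t0 t1 s c :
  {within `[t0, t1], continuous D} -> t0 <= s <= t1 -> D s != c ->
  exists2 d, 0 < d & forall u, t0 <= u <= t1 -> `|u - s| < d -> (D u < c) = (D s < c).
Proof.
move=> Dc ss Dsc.
have e0 : 0 < `|D s - c| by rewrite normr_gt0 subr_eq0.
have [d d0 Hd] := within_continuous_ball Dc (ltac:(by rewrite /= in_itv /=; exact: ss)) e0.
exists d => // u uu us; move: (Hd u (ltac:(by rewrite /= in_itv /=; exact: uu)) us).
rewrite ltr_norml; case: (ltrgtP (D s) c) Dsc => // Dsc _; first lra.
by move=> ?; apply/negbTE; rewrite -leNgt; lra.
Qed.

Lemma itv_le0_of_lt0_before D t0 t1 s :
  {within `[t0, t1], continuous D} -> t0 < s <= t1 ->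
  (forall v, t0 <= v < s -> D v < 0) -> D s <= 0.
Proof.
move=> Dc /andP[t0s st1] Dbelow; rewrite leNgt; apply/negP => Ds.
have ss : t0 <= s <= t1 by rewrite st1 andbT ltW.
have [d d0 Hd] := itv_continuous_sign Dc ss (lt0r_neq0 Ds).
pose v := Num.max t0 (s - d / 2).
have t0v : t0 <= v by rewrite le_max lexx.
have vs : v < s by rewrite gt_max t0s /=; lra.
have vd : `|v - s| < d.
  have : s - d / 2 <= v by rewrite le_max lexx orbT.
  by rewrite ltr_norml; lra.
move: (Hd v (ltac:(rewrite t0v /=; lra)) vd).
by rewrite Dbelow ?t0v // ltNge (ltW Ds).
Qed.

Lemma first_root D t0 t1 t :
  {within `[t0, t1], continuous D} -> D t0 < 0 -> t0 <= t <= t1 -> 0 < D t ->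
  exists s, [/\ t0 < s < t, D s = 0 & forall v, t0 <= v < s -> D v < 0].
Proof.
move=> Dc Dt0 /andP[t0t tt1] Dt.
pose S := [set u | t0 <= u <= t /\ forall v, t0 <= v <= u -> D v < 0].
have S0 : S t0.
  split=> [|v /andP[t0v vt0]]; first by rewrite lexx t0t.
  by have -> : v = t0 by apply/eqP; rewrite eq_le vt0 t0v.
have ubS : ubound S t by move=> u [/andP[_ ->]].
have supS : has_sup S by split; [exists t0 | exists t].
set s := sup S.
have t0s : t0 <= s by exact: sup_upper_bound.
have st : s <= t by apply: ge_sup => //; exists t0.
have Dbelow v : t0 <= v < s -> D v < 0.
  move=> /andP[t0v vs]; have [u [_ Hu] vu] := sup_adherent (ltac:(lra) : 0 < s - v) supS.
  by apply: Hu; rewrite t0v /=; move: vu; rewrite /s; lra.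
have Ds_le0 : D s <= 0.
  have [E|t0s'] := eqVneq t0 s; first by rewrite -E ltW.
  by apply: itv_le0_of_lt0_before Dc _ Dbelow; rewrite lt_neqAle t0s' t0s /=; lra.
have Ds_ge0 : 0 <= D s.
  rewrite leNgt; apply/negP => Ds.
  have ss : t0 <= s <= t1 by rewrite t0s /=; lra.
  have [d d0 Hd] := itv_continuous_sign Dc ss (ltr0_neq0 Ds).
  pose u := Num.min (s + d / 2) t.
  have ut : u <= t by rewrite ge_min lexx orbT.
  have usd : u <= s + d / 2 by rewrite ge_min lexx.
  have Su : S u.
    split=> [|v /andP[t0v vu]]; first by rewrite ut andbT le_min; lra.
    have [vs|sv] := ltP v s; first by apply: Dbelow; rewrite t0v.
    by rewrite (Hd v) ?Ds // ?t0v /=; [lra | rewrite ltr_norml; lra].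
  have us : u <= s by exact: sup_upper_bound.
  have [ut'|/eqP ut'] := eqVneq u t.
    by move: Su => [_ /(_ t)]; rewrite ut' t0t lexx => /(_ isT); lra.
  have : u = s + d / 2 by move: ut'; rewrite /u /Num.min; case: ifP.
  lra.
have Ds0 : D s = 0 by apply/eqP; rewrite eq_le Ds_le0 Ds_ge0.
exists s; split => //; apply/andP; split.
- by rewrite lt_neqAle t0s andbT; apply/negP => /eqP E; move: Dt0; rewrite E; lra.
- by rewrite lt_neqAle st andbT; apply/negP => /eqP E; move: Dt; rewrite -E; lra.
Qed.

Lemma itv_le0_of_root_left_pos D t0 t1 :
  {within `[t0, t1], continuous D} -> D t0 < 0 ->
  (forall s, t0 < s < t1 -> D s = 0 ->
     exists2 d, 0 < d & forall h, 0 < h < d -> 0 < D (s - h)) ->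
  forall t, t0 <= t <= t1 -> D t <= 0.
Proof.
move=> Dc Dt0 Droot t tt; rewrite leNgt; apply/negP => Dt.
have [s [/andP[t0s st] Ds Dbelow]] := first_root Dc Dt0 tt Dt.
have [d d0 Hd] := Droot s (ltac:(move: tt; lra)) Ds.
pose h := Num.min d (s - t0) / 2.
have hd : Num.min d (s - t0) <= d by rewrite ge_min lexx.
have hs : Num.min d (s - t0) <= s - t0 by rewrite ge_min lexx orbT.
have h0 : 0 < Num.min d (s - t0) by rewrite lt_min d0 /=; lra.
have := Hd h (ltac:(rewrite /h; lra)).
have := Dbelow (s - h) (ltac:(rewrite /h; lra)).
lra.
Qed.

Lemma is_derive_approx (V : normedModType R) (f : R -> V) s (v : V) :
  is_derive s 1 f v -> forall e, 0 < e ->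
  exists2 d, 0 < d & forall k, `|k| < d -> `|f (s + k) - f s - k *: v| <= e * `|k|.
Proof.
move=> [df dv] e e0.
have Hc : (fun h : R => h^-1 *: ((f \o shift s) (h *: 1) - f s)) @ 0^' --> v.
  by rewrite -dv; exact: df.
move/cvgrPdist_le : Hc => /(_ e e0).
rewrite nearE /= /dnbhs /within /= => /nbhs_ballP [d /= d0 H].
exists d => // k kd.
have [->|k0] := eqVneq k 0.
  by rewrite addr0 subrr scale0r subr0 !normr0 mulr0.
have := H k; rewrite /ball /= sub0r normrN => /(_ kd k0).
rewrite /shift /= scaler1 [k + s]addrC => Hk.
have -> : f (s + k) - f s - k *: v = - (k *: (v - k^-1 *: (f (s + k) - f s))).
  by rewrite scalerBr scalerA mulfV // scale1r opprB.
by rewrite normrN normrZ mulrC ler_wpM2r.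
Qed.

Lemma is_derive_left_increment (y : R -> R) s dy : is_derive s 1 y dy ->
  forall e, 0 < e -> exists2 d, 0 < d & forall h, 0 < h < d -> h * (dy - e) <= y s - y (s - h).
Proof.
move=> yd e e0; have [d d0 Hd] := is_derive_approx yd e0.
exists d => // h /andP[h0 hd].
move: (Hd (- h)); rewrite normrN gtr0_norm // => /(_ hd).
rewrite ler_norml /GRing.scale /= => /andP[_ +]; rewrite mulNr mulrBr [e * h]mulrC; lra.
Qed.

(* [expint lam s] is the integral of [expR (lam * u)] over [0, s]. *)
Definition expint lam s := if lam == 0 then s else (expR (lam * s) - 1) / lam.

Lemma expint0 lam : expint lam 0 = 0.
Proof. by rewrite /expint; case: eqP; rewrite ?mulr0 ?expR0 ?subrr ?mul0r. Qed.

Lemma mul_expint lam s : lam * expint lam s + 1 = expR (lam * s).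
Proof.
rewrite /expint; case: eqP => [->|/eqP l0]; first by rewrite !mul0r expR0 add0r.
by rewrite mulrC divfK // subrK.
Qed.

Lemma expint_le lam s s' : s <= s' -> expint lam s <= expint lam s'.
Proof.
move=> ss; rewrite /expint; case: eqP => // /eqP l0.
rewrite -subr_ge0 -mulrBl opprB addrA subrK.
have [lp|ln] := ltP 0 lam.
  rewrite divr_ge0 ?(ltW lp) // subr_ge0 ler_expR.
  by rewrite ler_wpM2l // ltW.
have ln' : lam < 0 by rewrite lt_neqAle l0.
rewrite -mulrNN -invrN mulr_ge0 ?invr_ge0 ?oppr_ge0 ?(ltW ln') //.
by rewrite subr_le0 ler_expR ler_wnM2l // ltW.
Qed.

Lemma expint_ge0 lam s : 0 <= s -> 0 <= expint lam s.
Proof. by move=> s0; rewrite -(expint0 lam); exact: expint_le. Qed.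

Lemma expintN zeta s : 0 < zeta -> expint (- zeta) s = (1 - expR (- zeta * s)) / zeta.
Proof.
move=> z0; rewrite /expint; case: eqP => [/eqP|_]; first by rewrite oppr_eq0 gt_eqF.
by rewrite invrN mulrN -mulNr opprB.
Qed.

Lemma expintN_le zeta s : 0 < zeta -> expint (- zeta) s <= zeta^-1.
Proof.
move=> z0; rewrite expintN // ler_pdivrMr // mulVf ?gt_eqF //; have := expR_gt0 (- zeta * s); lra.
Qed.

Lemma is_derive_expR_scale lam s :
  is_derive s 1 (fun u => expR (lam * u)) (lam * expR (lam * s)).
Proof.
have dlin : is_derive s 1 ( *%R lam) lam.
  by have := is_deriveZ lam (is_derive_id s 1); rewrite /GRing.scale /= mulr1.
by rewrite mulrC; exact: (is_derive1_comp (is_derive_expR _) dlin).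
Qed.

Lemma is_derive_expint lam s : is_derive s 1 (expint lam) (expR (lam * s)).
Proof.
rewrite /expint; case: eqP => [->|/eqP l0].
  by rewrite mul0r expR0; exact: is_derive_id.
have -> : (fun s => (expR (lam * s) - 1) / lam) =
    lam^-1 \*: ((fun u => expR (lam * u)) - cst 1) by apply/funext => u /=; rewrite mulrC.
have -> : expR (lam * s) = lam^-1 *: (lam * expR (lam * s) - 0).
  by rewrite subr0 /GRing.scale /= mulKf.
by apply: is_deriveZ; apply: is_deriveB; exact: is_derive_expR_scale.
Qed.

(* The solution of [y' = lam * y + B] with [y 0 = A]. *)
Definition affine_sol lam A B s := expR (lam * s) * A + B * expint lam s.

Lemma affine_sol0 lam A B : affine_sol lam A B 0 = A.
Proof. by rewrite /affine_sol expint0 mulr0 expR0 mul1r mulr0 addr0. Qed.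

Lemma is_derive_affine_sol lam A B s :
  is_derive s 1 (affine_sol lam A B) (lam * affine_sol lam A B s + B).
Proof.
have -> : lam * affine_sol lam A B s + B =
    A *: (lam * expR (lam * s)) + B *: expR (lam * s).
  by rewrite /affine_sol /GRing.scale /= -mul_expint; ring.
apply: is_deriveD.
- rewrite (_ : (fun u => _) = A \*: (fun u => expR (lam * u))); last first.
    by apply/funext => u /=; rewrite mulrC.
  exact: is_deriveZ (is_derive_expR_scale lam s).
- exact: is_deriveZ (is_derive_expint lam s).
Qed.

(* Bound [lam * g + mu] on the left upper Dini derivative of [g] on [(t0, t1)]. *)
Definition left_dini_le g t0 t1 lam mu :=
  forall s, t0 < s < t1 -> forall e, 0 < e -> exists2 d, 0 < d &
    forall h, 0 < h < d -> g s - g (s - h) <= h * (lam * g s + mu + e).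

(* Compare [g] with the solution of [y' = lam * y + mu + eps] started at
   [g t0 + eps]: [g - y] is negative at [t0] and becomes positive before each of
   its zeros; letting [eps] go to [0] yields the bound. *)
Lemma dini_comparison g t0 t1 lam mu :
  {within `[t0, t1], continuous g} -> left_dini_le g t0 t1 lam mu ->
  forall t, t0 <= t <= t1 -> g t <= expR (lam * (t - t0)) * g t0 + mu * expint lam (t - t0).
Proof.
move=> gc gd t tt.
set c := expR (lam * (t - t0)) + expint lam (t - t0).
have c0 : 0 <= c by rewrite addr_ge0 ?expR_ge0 // expint_ge0 //; move: tt; lra.
apply/ler_addgt0Pr => e e0.
pose eps := e / (c + 1).
have eps0 : 0 < eps by rewrite divr_gt0 //; lra.
have epsc : eps * c <= e by rewrite /eps mulrAC ler_pdivrMr; nra.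
pose y u := affine_sol lam (g t0 + eps) (mu + eps) (u - t0).
have yd (u : R) : is_derive u 1 y (lam * y u + (mu + eps)).
  rewrite -[X in is_derive _ _ _ X]mulr1.
  exact: is_derive1_comp (is_derive_affine_sol _ _ _ _) (is_derive_shift _ _ _).
have yc : continuous y.
  by move=> u; apply: differentiable_continuous; apply/derivable1_diffP; case: (yd u).
have : g t - y t <= 0.
  apply: (@itv_le0_of_root_left_pos (g \- y) t0 t1) => //.
  - move=> u; apply: (@continuousB _ _ (subspace _) g y u); first exact: gc.
    exact: continuous_subspaceT.
  - by rewrite /= /y subrr affine_sol0; lra.
  - move=> s ss /= /eqP; rewrite subr_eq0 => /eqP gys.
    have e40 : 0 < eps / 4 by lra.
    have [d1 d10 H1] := gd s ss _ e40.
    have [d2 d20 H2] := is_derive_left_increment (yd s) e40.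
    exists (Num.min d1 d2); first by rewrite lt_min d10.
    move=> h /andP[h0]; rewrite lt_min => /andP[hd1 hd2].
    move: (H1 h (ltac:(by rewrite h0))) (H2 h (ltac:(by rewrite h0))).
    rewrite gys => HA HB.
    have : 0 < eps * h by apply: mulr_gt0.
    rewrite !mulrDr in HA HB; lra.
rewrite /y /affine_sol /c mulrDr in epsc *.
rewrite mulrDr mulrDl [expR _ * eps]mulrC; lra.
Qed.
End Comparison.

Section Norms.
Variable R : realType.

Section IsNorm.
Variables (V : lmodType R) (N : V -> R).
Hypothesis hN : is_norm N.

Lemma is_norm0 : N 0 = 0.
Proof. by case: hN => _ NZ _; rewrite -(scale0r 0) NZ normr0 mul0r. Qed.

Lemma is_normN x : N (- x) = N x.
Proof. by case: hN => _ NZ _; rewrite -scaleN1r NZ normrN normr1 mul1r. Qed.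

Lemma is_normZ a x : N (a *: x) = `|a| * N x.
Proof. by case: hN. Qed.

Lemma is_normD x y : N (x + y) <= N x + N y.
Proof. by case: hN. Qed.

Lemma is_norm_ge0 x : 0 <= N x.
Proof. by have := is_normD x (- x); rewrite subrr is_norm0 is_normN; lra. Qed.

Lemma is_norm_gt0 x : x != 0 -> 0 < N x.
Proof.
move=> x0; rewrite lt_neqAle is_norm_ge0 andbT eq_sym.
by apply: contra x0 => /eqP; case: hN => N0 _ _ /N0 ->.
Qed.

Lemma is_normBC x y : N (x - y) = N (y - x).
Proof. by rewrite -is_normN opprB. Qed.

Lemma is_normB_tri x y z : N (x - z) <= N (x - y) + N (y - z).
Proof. by apply: le_trans (is_normD _ _); rewrite addrA subrK. Qed.

Lemma is_norm_distB x y : `|N x - N y| <= N (x - y).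
Proof.
have lerB u v : N u - N v <= N (u - v).
  by rewrite lerBlDr; apply: le_trans (is_normD _ _); rewrite subrK.
rewrite ler_norml lerB andbT; have := lerB y x; rewrite is_normBC; lra.
Qed.
End IsNorm.

Lemma ler_norm_mxentry n (v : 'rV[R]_n) i : `|v 0 i| <= `|v|.
Proof.
rewrite [X in _ <= X]mx_normrE.
exact: (le_bigmax 0 (fun ij : 'I_1 * 'I_n => `|v ij.1 ij.2|) (0, i)).
Qed.

Lemma is_norm_le_mx n (N : 'rV[R]_n -> R) : is_norm N ->
  exists2 C, 0 <= C & forall v, N v <= C * `|v|.
Proof.
move=> hN; exists (\sum_(j < n) N (delta_mx 0 j)).
  by apply: sumr_ge0 => j _; exact: is_norm_ge0.
move=> v; rewrite {1}(row_sum_delta v) mulr_suml.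
elim/big_ind2: _ => [|a b c d H1 H2|j _].
- by rewrite is_norm0.
- by apply: le_trans (is_normD hN b d) _; exact: lerD.
- rewrite is_normZ // mulrC ler_wpM2l ?is_norm_ge0 //.
  exact: ler_norm_mxentry.
Qed.

Lemma lipschitz_comp_within_continuous (V : normedModType R) (A : set R)
    (f : R -> V) (phi : V -> R) C :
  0 <= C -> (forall u v, `|phi u - phi v| <= C * `|u - v|) ->
  {within A, continuous f} -> {within A, continuous (phi \o f)}.
Proof.
move=> C0 phiC /subspace_continuousP fc; apply/subspace_continuousP => t At.
apply/cvgrPdist_lt => e e0.
have C1 : 0 < C + 1 by lra.
have e1 : 0 < e / (C + 1) by rewrite divr_gt0.
move/cvgrPdist_lt : (fc t At) => /(_ _ e1); apply: filterS => u /= Hu.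
apply: (le_lt_trans (phiC _ _)).
have : C * `|f t - f u| <= C * (e / (C + 1)) by rewrite ler_wpM2l // ltW.
by rewrite -[e in _ -> _ < e](@divfK _ (C + 1)) ?gt_eqF //; nra.
Qed.

Lemma is_norm_traj_continuous n (N : 'rV[R]_n -> R) (x : R -> 'rV[R]_n) c a b :
  is_norm N -> {within `[0, +oo[, continuous x} -> 0 <= a ->
  {within `[a, b], continuous (fun t => N (x t - c))}.
Proof.
move=> hN xc a0; have [C C0 HC] := is_norm_le_mx hN.
have sub : `[a, b] `<=` `[0, +oo[.
  by move=> u /=; rewrite !in_itv /= andbT => /andP[au _]; lra.
apply: (@lipschitz_comp_within_continuous _ _ _ (fun u => N (u - c)) C) => //.
  move=> u v; apply: le_trans (is_norm_distB hN _ _) _.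
  by rewrite opprB addrA subrK HC.
exact: continuous_subspaceW sub xc.
Qed.

Section WeakPairing.
Variables (n : nat) (N : 'rV[R]_n -> R) (wp : 'rV[R]_n -> 'rV[R]_n -> R).
Hypotheses (hN : is_norm N) (hwp : is_weak_pairing wp) (hc : wp_compatible wp N).

Lemma wpD x1 x2 y : wp (x1 + x2) y <= wp x1 y + wp x2 y.
Proof. by case: hwp. Qed.

Lemma wpZ a x y : 0 <= a -> wp (a *: x) y = a * wp x y.
Proof. by case: hwp => _ _ [wpZ _] _ _ a0; case: (wpZ a x y a0). Qed.

Lemma wp0 y : wp 0 y = 0.
Proof. by rewrite -(scale0r 0) wpZ // mul0r. Qed.

Lemma wp_le_mul x y : wp x y <= N x * N y.
Proof.
case: hwp => _ _ _ _ CS; apply: le_trans (ler_norm _) _.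
by apply: le_trans (CS x y) _; rewrite !hc !sqrtr_sqr !ger0_norm ?is_norm_ge0.
Qed.

Lemma is_norm_derive_approx (x : R -> 'rV[R]_n) (s : R) (v : 'rV[R]_n) :
  is_derive s 1 x v -> forall e, 0 < e -> exists2 d, 0 < d &
    forall h, 0 < h < d -> N (x (s - h) - x s + h *: v) <= e * h.
Proof.
move=> dx e e0; have [C C0 HC] := is_norm_le_mx hN.
have C1 : 0 < C + 1 by lra.
have e1 : 0 < e / (C + 1) by rewrite divr_gt0.
have [d d0 Hd] := is_derive_approx dx e1.
exists d => // h /andP[h0 hd].
move: (Hd (- h)); rewrite normrN gtr0_norm // scaleNr opprK => /(_ hd) Hr.
apply: le_trans (HC _) _.
have : C * `|x (s - h) - x s + h *: v| <= C * (e / (C + 1) * h) by rewrite ler_wpM2l.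
have : 0 <= e / (C + 1) * h by rewrite mulr_ge0 // ltW.
by rewrite -[e in _ -> _ -> _ <= e * _](@divfK _ (C + 1)) ?gt_eqF //; nra.
Qed.

Lemma is_norm_traj_left_dini (x : R -> 'rV[R]_n) (c : 'rV[R]_n) (s : R) (v : 'rV[R]_n)
    (lam mu : R) :
  is_derive s 1 x v -> 0 <= mu ->
  wp v (x s - c) <= (lam * N (x s - c) + mu) * N (x s - c) ->
  forall e, 0 < e -> exists2 d, 0 < d & forall h, 0 < h < d ->
    N (x s - c) - N (x (s - h) - c) <= h * (lam * N (x s - c) + mu + e).
Proof.
move=> dx mu0 wpv e e0; have [d d0 Hd] := is_norm_derive_approx dx e0.
exists d => // h /andP[h0 hd]; have Nr := Hd h (ltac:(by rewrite h0)).
set r := x (s - h) - x s + h *: v in Nr.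
set y := x s - c; set w := x (s - h) - c.
have yE : y = w + (h *: v - r) by apply/rowP => i; rewrite !mxE; ring.
have Ny_sq : N y ^+ 2 <= N w * N y + (h * wp v y + N r * N y).
  rewrite -hc {1}yE; apply: le_trans (wpD _ _ _) _.
  rewrite lerD ?wp_le_mul //; apply: le_trans (wpD _ _ _) _.
  by rewrite wpZ ?(ltW h0) // lerD // -(is_normN hN r); exact: wp_le_mul.
have Ny0 := is_norm_ge0 hN y; have Nw0 := is_norm_ge0 hN w.
have [Ny|Ny] := eqVneq (N y) 0.
  rewrite Ny mulr0 add0r; have : 0 <= h * (mu + e) by rewrite mulr_ge0 //; lra.
  lra.
have Nyp : 0 < N y by rewrite lt_neqAle eq_sym Ny.
have : h * wp v y <= h * ((lam * N y + mu) * N y) by rewrite ler_wpM2l // ltW.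
rewrite expr2 in Ny_sq => hwpv.
have : N y <= N w + h * (lam * N y + mu) + N r.
  by rewrite -(ler_pM2l Nyp); nra.
nra.
Qed.
End WeakPairing.
End Norms.

Section LipschitzConstants.
Variable R : realType.

Lemma fine_ereal_sup_ub (S : set (\bar R)) r :
  S r%:E -> (ereal_sup S < +oo)%E -> r <= fine (ereal_sup S).
Proof.
move=> Sr; have := ereal_sup_ubound Sr.
by case: (ereal_sup S) => [s| |] //=; rewrite lee_fin.
Qed.

(* [ereal_sup set0 = -oo], whose [fine] is [0]. *)
Lemma fine_ereal_sup_ge0 (S : set (\bar R)) :
  (forall e, S e -> (0 <= e)%E) -> (ereal_sup S < +oo)%E -> 0 <= fine (ereal_sup S).
Proof.
move=> S_ge0 Sfin; have [[e Se]|S0] := pselect (exists e, S e).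
  by apply: fine_ge0; apply: le_trans (S_ge0 e Se) (ereal_sup_ubound Se).
have -> : S = set0 by apply/seteqP; split => x Sx //; exfalso; apply: S0; exists x.
by rewrite ereal_sup0.
Qed.

Lemma fine_lt1 (x : \bar R) : (x < 1%:E)%E -> fine x < 1.
Proof. by case: x => [s| |] //=; rewrite ?lte_fin. Qed.

Lemma Lip_snd_le (A : Type) (B C : lmodType R) (SA : set A) (SB : set B) NB NC
    (F : A -> B -> C) a z1 z2 :
  is_norm NB -> is_norm NC -> (Lip_snd SA SB NB NC F < +oo)%E -> SA a -> SB z1 -> SB z2 ->
  NC (F a z1 - F a z2) <= fine (Lip_snd SA SB NB NC F) * NB (z1 - z2).
Proof.
move=> hB hC Lfin Sa S1 S2.
have [->|z12] := eqVneq z1 z2; first by rewrite !subrr (is_norm0 hB) (is_norm0 hC) mulr0.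
have NBp : 0 < NB (z1 - z2) by apply: is_norm_gt0; rewrite ?subr_eq0.
rewrite -ler_pdivrMr //; apply: fine_ereal_sup_ub Lfin.
by exists a, z1, z2.
Qed.

Lemma Lip_fst_le (A : lmodType R) (B : Type) (C : lmodType R) (SA : set A) (SB : set B)
    NA NC (F : A -> B -> C) b x1 x2 :
  is_norm NA -> is_norm NC -> (Lip_fst SA SB NA NC F < +oo)%E -> SB b -> SA x1 -> SA x2 ->
  NC (F x1 b - F x2 b) <= fine (Lip_fst SA SB NA NC F) * NA (x1 - x2).
Proof.
move=> hA hC Lfin Sb S1 S2.
have [->|x12] := eqVneq x1 x2; first by rewrite !subrr (is_norm0 hA) (is_norm0 hC) mulr0.
have NAp : 0 < NA (x1 - x2) by apply: is_norm_gt0; rewrite ?subr_eq0.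
rewrite -ler_pdivrMr //; apply: fine_ereal_sup_ub Lfin.
by exists b, x1, x2.
Qed.

Lemma Lip_snd_ge0 (A : Type) (B C : lmodType R) (SA : set A) (SB : set B) NB NC
    (F : A -> B -> C) :
  is_norm NB -> is_norm NC -> (Lip_snd SA SB NB NC F < +oo)%E ->
  0 <= fine (Lip_snd SA SB NB NC F).
Proof.
move=> hB hC; apply: fine_ereal_sup_ge0 => _ [a [z1 [z2 [_ _ _ _ ->]]]].
by rewrite lee_fin divr_ge0 ?is_norm_ge0.
Qed.

Lemma Lip_fst_ge0 (A : lmodType R) (B : Type) (C : lmodType R) (SA : set A) (SB : set B)
    NA NC (F : A -> B -> C) :
  is_norm NA -> is_norm NC -> (Lip_fst SA SB NA NC F < +oo)%E ->
  0 <= fine (Lip_fst SA SB NA NC F).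
Proof.
move=> hA hC; apply: fine_ereal_sup_ge0 => _ [b [x1 [x2 [_ _ _ _ ->]]]].
by rewrite lee_fin divr_ge0 ?is_norm_ge0.
Qed.

Lemma osLip_fst_le n (B : Type) (SA : set 'rV[R]_n) (SB : set B) wp N
    (F : 'rV[R]_n -> B -> 'rV[R]_n) (xi : R) b x1 x2 :
  is_norm N -> is_weak_pairing wp -> (osLip_fst SA SB wp N F <= xi%:E)%E ->
  SB b -> SA x1 -> SA x2 ->
  wp (F x1 b - F x2 b) (x1 - x2) <= xi * N (x1 - x2) ^+ 2.
Proof.
move=> hN hwp Lxi Sb S1 S2.
have [->|x12] := eqVneq x1 x2.
  by rewrite !subrr (is_norm0 hN) expr0n /= mulr0 (wp0 hwp).
have Np : 0 < N (x1 - x2) ^+ 2 by rewrite exprn_gt0 // is_norm_gt0 ?subr_eq0.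
rewrite -ler_pdivrMr // -lee_fin; apply: le_trans Lxi.
by apply: ereal_sup_ubound; exists b, x1, x2.
Qed.

Lemma osLip_le n (SA : set 'rV[R]_n) wp N (F : 'rV[R]_n -> 'rV[R]_n) (xi : R) x1 x2 :
  is_norm N -> is_weak_pairing wp -> (osLip SA wp N F <= xi%:E)%E -> SA x1 -> SA x2 ->
  wp (F x1 - F x2) (x1 - x2) <= xi * N (x1 - x2) ^+ 2.
Proof.
move=> hN hwp Lxi S1 S2.
have [->|x12] := eqVneq x1 x2.
  by rewrite !subrr (is_norm0 hN) expr0n /= mulr0 (wp0 hwp).
have Np : 0 < N (x1 - x2) ^+ 2 by rewrite exprn_gt0 // is_norm_gt0 ?subr_eq0.
rewrite -ler_pdivrMr // -lee_fin; apply: le_trans Lxi.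
by apply: ereal_sup_ubound; exists x1, x2.
Qed.
End LipschitzConstants.

Section TwoDimDecay.
Variable R : realType.
Variables m11 m12 m21 m22 : R.
Hypotheses (m12_ge0 : 0 <= m12) (m21_ge0 : 0 <= m21) (m11_lt1 : m11 < 1) (m22_lt1 : m22 < 1)
  (det_gt0 : m12 * m21 < (1 - m11) * (1 - m22)).

(* Along [X' <= m11 X + m12 E, E' <= m21 X + m22 E] the weighted sum [X + q E]
   contracts by [decay_rate]: [q] is chosen so that both [m11 + q m21] and
   [(m12 + q m22) / q] are below [1], which the determinant condition allows;
   the floor [1 / 2] only keeps the rate positive. *)
Definition decay_weight :=
  (m12 + ((1 - m11) * (1 - m22) - m12 * m21) / (2 * (m21 + 1))) / (1 - m22).

Definition decay_rate :=
  Num.max (Num.max (m11 + decay_weight * m21)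
    ((m12 + decay_weight * m22) / decay_weight)) (1 / 2).

Let q := decay_weight.

Lemma decay_weight_gt0 : 0 < q.
Proof.
have := det_gt0; have := m21_ge0; have := m12_ge0; have := m22_lt1 => *.
rewrite /q /decay_weight divr_gt0 ?subr_gt0 //.
have : 0 < ((1 - m11) * (1 - m22) - m12 * m21) / (2 * (m21 + 1)).
  by rewrite divr_gt0 //; lra.
lra.
Qed.

Lemma decay_rate_gt0 : 0 < decay_rate.
Proof. by rewrite /decay_rate lt_max; apply/orP; right; lra. Qed.

Lemma decay_rate_ge : m11 + q * m21 <= decay_rate /\ m12 + q * m22 <= decay_rate * q.
Proof.
have q0 := decay_weight_gt0; split; first by rewrite /decay_rate !le_max lexx.
by rewrite -ler_pdivrMr // /decay_rate !le_max lexx -/q orbT.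
Qed.

Lemma decay_rate_lt1 : decay_rate < 1.
Proof.
have := det_gt0; have := m11_lt1; have := m22_lt1; have := m12_ge0; have := m21_ge0.
move=> m21_0 m12_0 m22_1 m11_1 det0; have q0 := decay_weight_gt0.
set D := (1 - m11) * (1 - m22) - m12 * m21.
have D0 : 0 < D by rewrite /D; lra.
set dl := D / (2 * (m21 + 1)).
have dl0 : 0 < dl by rewrite divr_gt0 //; lra.
have dlE : dl * (2 * (m21 + 1)) = D by rewrite /dl divfK // gt_eqF //; lra.
have qE : q * (1 - m22) = m12 + dl.
  by rewrite /q /decay_weight -/D -/dl divfK // gt_eqF // subr_gt0.
rewrite /decay_rate -/q !gt_max; apply/andP; split; last lra.
apply/andP; split.
- suff : q * m21 * (1 - m22) < (1 - m11) * (1 - m22).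
    by rewrite ltr_pM2r ?subr_gt0 //; lra.
  have -> : q * m21 * (1 - m22) = (m12 + dl) * m21 by rewrite -qE; ring.
  have : dl * m21 < D by nra.
  by rewrite /D; lra.
- by rewrite ltr_pdivrMr // mul1r; nra.
Qed.

Lemma two_dim_decay (X E : nat -> R) :
  (forall k, 0 <= X k) -> (forall k, 0 <= E k) ->
  (forall k, X k.+1 <= m11 * X k + m12 * E k) ->
  (forall k, E k.+1 <= m21 * X k + m22 * E k) ->
  forall k, X k + q * E k <= decay_rate ^+ k * (X 0%N + q * E 0%N).
Proof.
move=> X0 E0 HX HE.
have q0 := decay_weight_gt0; have [r1 r2] := decay_rate_ge.
have step k : X k.+1 + q * E k.+1 <= decay_rate * (X k + q * E k).
  have := HX k; have := HE k; have := X0 k; have := E0 k.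
  have := ler_wpM2r (E0 k) r2; have := ler_wpM2r (X0 k) r1.
  nra.
elim => [|k IH]; first by rewrite expr0 mul1r.
apply: le_trans (step k) _.
by rewrite exprS -mulrA ler_wpM2l // ltW // decay_rate_gt0.
Qed.
End TwoDimDecay.

Section WeightedNorm.
Variable R : realType.

Lemma wnorm2_le_add (a b : R) : 0 <= a -> 0 <= b -> wnorm2 1 1 a b <= a + b.
Proof.
move=> a0 b0; rewrite /wnorm2 !mul1r.
have -> : a + b = Num.sqrt ((a + b) ^+ 2) by rewrite sqrtr_sqr ger0_norm //; lra.
by apply: ler_wsqrtr; rewrite sqrrD; have := mulr_ge0 a0 b0; lra.
Qed.

Lemma add_le_wnorm2 (a b : R) : 0 <= a -> 0 <= b -> a + b <= 2 * wnorm2 1 1 a b.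
Proof.
move=> a0 b0; rewrite /wnorm2 !mul1r.
have a_le : a <= Num.sqrt (a ^+ 2 + b ^+ 2).
  by rewrite -{1}(ger0_norm a0) -sqrtr_sqr ler_wsqrtr // lerDl sqr_ge0.
have b_le : b <= Num.sqrt (a ^+ 2 + b ^+ 2).
  by rewrite -{1}(ger0_norm b0) -sqrtr_sqr ler_wsqrtr // lerDr sqr_ge0.
lra.
Qed.
End WeightedNorm.

Section RateToExponent.
Variable R : realType.

Lemma expr_le_expR_ln (th T t : R) k : 0 < th < 1 -> 0 < T -> t < k.+1%:R * T ->
  th ^+ k <= expR (ln th * (t / T)) / th.
Proof.
move=> /andP[th0 th1] T0 tk.
rewrite ler_pdivlMr // -exprSr -[th]lnK ?posrE // -expRM_natr ler_expR.
rewrite lnK ?posrE // ler_wnM2l ?ln_le0 ?(ltW th1) //.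
by rewrite ler_pdivrMr // ltW.
Qed.
End RateToExponent.

Section ExpintHit.
Variable R : realType.
Implicit Types xi r T : R.

(* The time at which [expint xi] reaches the level [r] ([+oo] if it never does). *)
Definition expint_hit xi r : \bar R :=
  if xi == 0 then r%:E
  else if xi * r + 1 <= 0 then +oo%E else (ln (xi * r + 1) / xi)%:E.

Lemma expint_hit_gt0 xi r : 0 < r -> (0%:E < expint_hit xi r)%E.
Proof.
move=> r0; rewrite /expint_hit; case: eqP => [_|/eqP xi0]; first by rewrite lte_fin.
case: ifP => [_|/negbT]; first exact: ltey.
rewrite -ltNge lte_fin => arg0.
have [xip|xin] := ltP 0 xi.
  by rewrite divr_gt0 // ln_gt0 // ltrDr mulr_gt0.
have xin' : xi < 0 by rewrite lt_neqAle xi0.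
have : ln (xi * r + 1) < 0 by rewrite ln_lt0 // arg0 /= gtrDr nmulr_rlt0.
by move=> lnn; rewrite -mulrNN -invrN mulr_gt0 ?invr_gt0 ?oppr_gt0.
Qed.

Lemma expint_lt_of_lt_hit xi r T : 0 < r -> 0 < T ->
  (T%:E < expint_hit xi r)%E -> expint xi T < r.
Proof.
move=> r0 T0; rewrite /expint_hit /expint; case: eqP => [_|/eqP xi0]; first by rewrite lte_fin.
have [xip|xin] := ltP 0 xi.
  have arg1 : 1 < xi * r + 1 by rewrite ltrDr mulr_gt0.
  rewrite leNgt (lt_trans ltr01 arg1) /= lte_fin ltr_pdivlMr // => HT.
  rewrite ltr_pdivrMr // ltrBlDr [r * _]mulrC.
  by rewrite -[xi * r + 1]lnK ?posrE ?(lt_trans ltr01 arg1) // ltr_expR [xi * T]mulrC.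
have xin' : xi < 0 by rewrite lt_neqAle xi0.
have suff_exp : xi * r + 1 < expR (xi * T) -> (expR (xi * T) - 1) / xi < r.
  by move=> H; rewrite -mulrNN -invrN ltr_pdivrMr ?oppr_gt0 //; lra.
case: ifP => [arg0 _|/negbT]; first by apply: suff_exp; exact: le_lt_trans arg0 (expR_gt0 _).
rewrite -ltNge lte_fin ltr_ndivlMr // => arg0 HT; apply: suff_exp.
by rewrite -[xi * r + 1]lnK ?posrE // ltr_expR [xi * T]mulrC.
Qed.
End ExpintHit.

Section SamplingBound.
Variable R : realType.
Variables (L a b c xi zeta : R) (n : nat).

(* With [L, a, b, c] standing for [Lip_z G, Lip_x G, Lip_z f, Lip_x f], [Kz] is a
   Lipschitz constant of [zstar] and [Kf = b * Kz]. *)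
Definition Kz := a / (1 - L).
Definition Kf := b * a / (1 - L).
Definition C1 := Kf * (c + Kf).
Definition C2 := L ^+ n * (a * b / (1 - L)).

Lemma Kf_Kz : Kf = b * Kz.
Proof. by rewrite /Kf /Kz mulrA. Qed.

Hypotheses (L_ge0 : 0 <= L) (L_lt1 : L < 1) (a_gt0 : 0 < a) (b_gt0 : 0 < b)
  (c_ge0 : 0 <= c) (zeta_gt0 : 0 < zeta) (n_gt0 : (0 < n)%N).

Lemma gain_gt0 : 0 < C2 + C1 / zeta.
Proof.
have := L_lt1; have := a_gt0; have := b_gt0; have := c_ge0 => c0 b0 a0 L1.
have Kf0 : 0 < Kf by rewrite /Kf divr_gt0 ?mulr_gt0 ?subr_gt0.
have : 0 < C1 / zeta by rewrite divr_gt0 // /C1 mulr_gt0 //; lra.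
have : 0 <= C2 by rewrite /C2 mulr_ge0 ?exprn_ge0 // divr_ge0 ?mulr_ge0 //; lra.
lra.
Qed.

Lemma one_sub_Ln_gt0 : 0 < 1 - L ^+ n.
Proof. by rewrite subr_gt0 exprn_ilt1 // -lt0n. Qed.

Lemma Tbound_hit : Tbound L a b c xi zeta n =
  expint_hit xi ((1 - L ^+ n) / (C2 + C1 / zeta)).
Proof. by rewrite /Tbound /expint_hit /C1 /C2 /Kf /= !mulrA. Qed.

Lemma Tbound_gt0 : (0%:E < Tbound L a b c xi zeta n)%E.
Proof. by rewrite Tbound_hit expint_hit_gt0 // divr_gt0 ?one_sub_Ln_gt0 ?gain_gt0. Qed.

Lemma sampling_cond_of_Tbound T : 0 < T -> (T%:E < Tbound L a b c xi zeta n)%E ->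
  expint xi T * (C2 + C1 / zeta) < 1 - L ^+ n.
Proof.
move=> T0; rewrite Tbound_hit -ltr_pdivlMr ?gain_gt0 //.
by apply: expint_lt_of_lt_hit; rewrite // divr_gt0 ?one_sub_Ln_gt0 ?gain_gt0.
Qed.
End SamplingBound.

Section Interconnection.
Variables (R : realType) (nx nz : nat) (Nx : 'rV[R]_nx -> R) (Nz : 'rV[R]_nz -> R).
Variables (X : set 'rV[R]_nx) (Z : set 'rV[R]_nz).
Variables (f : 'rV[R]_nx -> 'rV[R]_nz -> 'rV[R]_nx) (G : 'rV[R]_nx -> 'rV[R]_nz -> 'rV[R]_nz).
Variables (wp : 'rV[R]_nx -> 'rV[R]_nx -> R) (zstar : 'rV[R]_nx -> 'rV[R]_nz).
Variables (xi zeta L a b c : R).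
Hypotheses (hNx : is_norm Nx) (hNz : is_norm Nz) (hwp : is_weak_pairing wp)
  (hc : wp_compatible wp Nx).
Hypotheses (X0 : X 0) (Z0 : Z 0) (f00 : f 0 0 = 0) (G00 : G 0 0 = 0).
Hypothesis GZ : forall x z, X x -> Z z -> Z (G x z).
Hypothesis zstarP : forall x, X x -> Z (zstar x) /\ G x (zstar x) = zstar x.
Hypotheses (L_ge0 : 0 <= L) (L_lt1 : L < 1) (a_ge0 : 0 <= a) (b_ge0 : 0 <= b)
  (c_ge0 : 0 <= c) (zeta_gt0 : 0 < zeta).
Hypothesis G_lip_z : forall x z1 z2, X x -> Z z1 -> Z z2 ->
  Nz (G x z1 - G x z2) <= L * Nz (z1 - z2).
Hypothesis G_lip_x : forall z x1 x2, Z z -> X x1 -> X x2 ->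
  Nz (G x1 z - G x2 z) <= a * Nx (x1 - x2).
Hypothesis f_lip_z : forall x z1 z2, X x -> Z z1 -> Z z2 ->
  Nx (f x z1 - f x z2) <= b * Nz (z1 - z2).
Hypothesis f_lip_x : forall z x1 x2, Z z -> X x1 -> X x2 ->
  Nx (f x1 z - f x2 z) <= c * Nx (x1 - x2).
Hypothesis f_oslip_x : forall z x1 x2, Z z -> X x1 -> X x2 ->
  wp (f x1 z - f x2 z) (x1 - x2) <= xi * Nx (x1 - x2) ^+ 2.
Hypothesis f_zstar_oslip : forall x1 x2, X x1 -> X x2 ->
  wp (f x1 (zstar x1) - f x2 (zstar x2)) (x1 - x2) <= - zeta * Nx (x1 - x2) ^+ 2.

Lemma Kz_ge0 : 0 <= Kz L a.
Proof. by rewrite /Kz divr_ge0 // subr_ge0 ltW. Qed.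

Lemma Kf_ge0 : 0 <= Kf L a b.
Proof. by rewrite Kf_Kz mulr_ge0 // Kz_ge0. Qed.

Lemma zstar0 : zstar 0 = 0.
Proof.
have [Zs Gs] := zstarP X0.
have := G_lip_z X0 Zs Z0; rewrite Gs G00 => Hs.
have Ns0 : Nz (zstar 0 - 0) <= 0.
  have := is_norm_ge0 hNz (zstar 0 - 0); have := L_lt1; nra.
by have [N0 _ _] := hNz; rewrite -[zstar 0]subr0; apply: N0; apply/eqP;
  rewrite eq_le Ns0 is_norm_ge0.
Qed.

Lemma zstar_lip x x' : X x -> X x' -> Nz (zstar x - zstar x') <= Kz L a * Nx (x - x').
Proof.
move=> Xx Xx'; have [Zs Gs] := zstarP Xx; have [Zs' Gs'] := zstarP Xx'.
have H : Nz (zstar x - zstar x') <= L * Nz (zstar x - zstar x') + a * Nx (x - x').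
  rewrite -{1}Gs -{1}Gs' -(subrK (G x (zstar x')) (G x (zstar x))) -addrA.
  apply: le_trans (is_normD hNz _ _) _; apply: lerD; first exact: G_lip_z.
  exact: G_lip_x.
have := L_lt1; have := is_norm_ge0 hNz (zstar x - zstar x') => N0 L1.
by rewrite /Kz mulrAC ler_pdivlMr ?subr_gt0 //; nra.
Qed.

Lemma Giter_Z m x z : X x -> Z z -> Z (Giter G m x z).
Proof. by move=> Xx Zz; elim: m => [|m IH] //=; apply: GZ. Qed.

Lemma Giter_contract m x z : X x -> Z z ->
  Nz (Giter G m x z - zstar x) <= L ^+ m * Nz (z - zstar x).
Proof.
move=> Xx Zz; have [Zs Gs] := zstarP Xx.
elim: m => [|m IH]; first by rewrite expr0 mul1r.
rewrite /Giter iterS -/(Giter G m x z) -{1}Gs.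
apply: le_trans (G_lip_z Xx (Giter_Z m Xx Zz) Zs) _.
by rewrite exprS -mulrA ler_wpM2l.
Qed.

Lemma f_norm_le x z : X x -> Z z ->
  Nx (f x z) <= b * Nz (z - zstar x) + (c + Kf L a b) * Nx x.
Proof.
move=> Xx Zz; have [Zs _] := zstarP Xx.
have -> : f x z = (f x z - f x (zstar x)) + (f x (zstar x) - f 0 (zstar x))
   + (f 0 (zstar x) - f 0 0) by rewrite f00 subr0 !addrA !subrK.
have := f_lip_x Zs Xx X0; have := f_lip_z X0 Zs Z0; have := zstar_lip Xx X0.
rewrite zstar0 !subr0 => h_zs h3 h2.
apply: le_trans (is_normD hNx _ _) _.
apply: le_trans (lerD (is_normD hNx _ _) (lexx _)) _.
have := f_lip_z Xx Zz Zs; have := ler_wpM2l b_ge0 h_zs.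
rewrite mulrA -Kf_Kz mulrDl; lra.
Qed.

Section Sampling.
Variables (n : nat) (T : R).
Hypothesis T_gt0 : 0 < T.

(* Over one sampling period, [(xsample k, zgap k)] (defined below) is bounded
   componentwise by this matrix applied to its previous value. *)
Definition m11 :=
  expR (- zeta * T) + expint (- zeta) T * (Kf L a b * expint xi T * (c + Kf L a b)).
Definition m12 := expint (- zeta) T * (b * (1 + Kf L a b * expint xi T)).
Definition m21 := L ^+ n * (Kz L a * expint xi T * (c + Kf L a b)).
Definition m22 := L ^+ n * (1 + Kz L a * expint xi T * b).

Lemma gain_matrix_offdiag_ge0 : 0 <= m12 /\ 0 <= m21.
Proof.
have Ps : 0 <= expint xi T by rewrite expint_ge0 // ltW.
have Om : 0 <= expint (- zeta) T by rewrite expint_ge0 // ltW.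
have := mulr_ge0 Kf_ge0 Ps; have := mulr_ge0 Kz_ge0 Ps; have := c_ge0; have := Kf_ge0.
have := b_ge0; have Ln : 0 <= L ^+ n by rewrite exprn_ge0.
move=> b0 Kf0 c0 KzP KfP; split.
- by rewrite mulr_ge0 // mulr_ge0 //; lra.
- by rewrite mulr_ge0 // mulr_ge0 //; lra.
Qed.

Lemma gain_matrix_stable : expint xi T * (C2 L a b n + C1 L a b c / zeta) < 1 - L ^+ n ->
  [/\ m11 < 1, m22 < 1 & m12 * m21 < (1 - m11) * (1 - m22)].
Proof.
move=> cond.
have Ps : 0 <= expint xi T by rewrite expint_ge0 // ltW.
have Kf0 := Kf_ge0; have Ln : 0 <= L ^+ n by rewrite exprn_ge0.
have := c_ge0; have := L_lt1; have := zeta_gt0 => z0 L1 c0.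
have zeta_neq0 : zeta != 0 by rewrite lt0r_neq0.
have den_neq0 : (zeta != 0) && (1 - L != 0) by rewrite zeta_neq0 lt0r_neq0 ?subr_gt0.
have bt0 : 0 < 1 - expR (- zeta * T) by rewrite subr_gt0 expR_lt1 mulNr oppr_lt0 mulr_gt0.
(* With these [u] and [v], [1 - m11 = (1 - expR (- zeta * T)) * (1 - u)] and
   [1 - m22 = 1 - L ^+ n - v]; the determinant condition becomes [u + v < 1 - L ^+ n],
   which is the sampling condition. *)
set u := C1 L a b c * expint xi T / zeta.
set v := L ^+ n * Kf L a b * expint xi T.
have C10 : 0 <= C1 L a b c by rewrite /C1 mulr_ge0 //; lra.
have u0 : 0 <= u by rewrite /u divr_ge0 ?(ltW z0) // mulr_ge0.
have v0 : 0 <= v by rewrite /v mulr_ge0 // mulr_ge0.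
have uv : u + v < 1 - L ^+ n.
  suff -> : u + v = expint xi T * (C2 L a b n + C1 L a b c / zeta) by [].
  by rewrite /u /v /C2 /Kf (mulrC a b); field => //.
have E11 : 1 - m11 = (1 - expR (- zeta * T)) * (1 - u).
  by rewrite /m11 expintN // /u /C1; field => //.
have E22 : 1 - m22 = 1 - L ^+ n - v by rewrite /m22 /v Kf_Kz; ring.
have E12 : m12 * m21 = (1 - expR (- zeta * T)) * (L ^+ n * (1 + Kf L a b * expint xi T)) * u.
  by rewrite /m12 /m21 expintN // /u /C1 Kf_Kz; field => //.
split.
- have : 0 < (1 - expR (- zeta * T)) * (1 - u) by rewrite mulr_gt0 //; lra.
  lra.
- lra.
- have : (1 - m11) * (1 - m22) - m12 * m21 = (1 - expR (- zeta * T)) * (1 - L ^+ n - u - v).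
    by rewrite E11 E22 E12 /v; ring.
  have : 0 < (1 - expR (- zeta * T)) * (1 - L ^+ n - u - v) by rewrite mulr_gt0 //; lra.
  lra.
Qed.

Definition sample_weight := decay_weight m11 m12 m21 m22.
Definition sample_rate := decay_rate m11 m12 m21 m22.
Definition decay_exponent := - ln sample_rate / T.
Definition interval_gain :=
  Num.max (1 + Kf L a b * expint xi T * (c + Kf L a b) / zeta + Kz L a)
    (((b + Kf L a b * expint xi T * b) / zeta + 1) / sample_weight).
Definition initial_gain := Num.max (1 + sample_weight * Kz L a) sample_weight.
Definition overshoot := 2 * interval_gain * initial_gain / sample_rate.

Section Stable.
Hypothesis sampling_cond :
  expint xi T * (C2 L a b n + C1 L a b c / zeta) < 1 - L ^+ n.

Lemma sample_decay_consts :
  [/\ 0 < sample_weight, 0 < sample_rate & sample_rate < 1].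
Proof.
have [h12 h21] := gain_matrix_offdiag_ge0.
have [l11 l22 det] := gain_matrix_stable sampling_cond.
by split; [exact: decay_weight_gt0 | exact: decay_rate_gt0 | exact: decay_rate_lt1].
Qed.

Lemma decay_exponent_gt0 : 0 < decay_exponent.
Proof.
have [_ r0 r1] := sample_decay_consts.
by rewrite /decay_exponent divr_gt0 // oppr_gt0 ln_lt0 // r0.
Qed.

Lemma interval_gain_ge1 : 1 <= interval_gain.
Proof.
have Ps : 0 <= expint xi T by rewrite expint_ge0 // ltW.
have Kz0 := Kz_ge0; have Kf0 := Kf_ge0; have := c_ge0; have := zeta_gt0 => z0 c0.
have : 0 <= Kf L a b * expint xi T * (c + Kf L a b) / zeta.
  by rewrite divr_ge0 ?(ltW z0) // mulr_ge0 ?addr_ge0 // mulr_ge0.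
by move=> ?; rewrite /interval_gain le_max; apply/orP; left; lra.
Qed.

Lemma initial_gain_gt0 : 0 < initial_gain.
Proof.
have [q0 _ _] := sample_decay_consts.
by rewrite /initial_gain lt_max q0 orbT.
Qed.

Lemma overshoot_gt0 : 0 < overshoot.
Proof.
have [_ r0 _] := sample_decay_consts; have := interval_gain_ge1 => P1.
by rewrite /overshoot divr_gt0 // mulr_gt0 ?initial_gain_gt0 // mulr_gt0 //; lra.
Qed.
End Stable.

Section Solution.
Variables (x : R -> 'rV[R]_nx) (zs : nat -> 'rV[R]_nz).
Hypothesis hsol : is_solution X Z f G n T x zs.

Lemma sample_time_ge0 k : 0 <= k%:R * T.
Proof. by rewrite mulr_ge0 // ltW. Qed.

Lemma sample_timeS k : k.+1%:R * T = k%:R * T + T.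
Proof. by rewrite -addn1 natrD mulrDl mul1r. Qed.

Lemma sol_X t : 0 <= t -> X (x t).
Proof. by case: hsol => solX _ _ _ _; exact: solX. Qed.

Lemma sol_Z k : Z (zs k).
Proof. by case: hsol => _ solZ _ _ _; exact: solZ. Qed.

Lemma sol_zs k : zs k.+1 = Giter G n (x (k%:R * T)) (zs k).
Proof. by case: hsol => _ _ solzs _ _; exact: solzs. Qed.

Lemma sol_derive k t : k%:R * T < t < k%:R * T + T ->
  is_derive t 1 x (f (x t) (zs k.+1)).
Proof. by case: hsol => _ _ _ _ solder; rewrite -sample_timeS; exact: solder. Qed.

Lemma sol_norm_continuous c0 k :
  {within `[k%:R * T, k%:R * T + T], continuous (fun t => Nx (x t - c0))}.
Proof.
case: hsol => _ _ _ xc _.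
exact: is_norm_traj_continuous hNx xc (sample_time_ge0 k).
Qed.

Lemma sol_drift_le k t : k%:R * T <= t <= k%:R * T + T ->
  Nx (x t - x (k%:R * T)) <=
    Nx (f (x (k%:R * T)) (zs k.+1)) * expint xi (t - k%:R * T).
Proof.
set tk := k%:R * T; set xk := x tk; set z := zs k.+1; set F := Nx (f xk z) => ht.
have Xk : X xk by apply: sol_X; exact: sample_time_ge0.
have gd : left_dini_le (fun t => Nx (x t - xk)) tk (tk + T) xi F.
  move=> s /andP[s1 s2].
  have Xs : X (x s) by apply: sol_X; apply: le_trans (sample_time_ge0 k) (ltW s1).
  have ds : is_derive s 1 x (f (x s) z) by apply: sol_derive; rewrite s1 s2.
  apply: (is_norm_traj_left_dini hNx hwp hc ds); first exact: is_norm_ge0.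
  rewrite -[f (x s) z](subrK (f xk z)); apply: le_trans (wpD hwp _ _ _) _.
  have := f_oslip_x (sol_Z k.+1) Xs Xk; have := wp_le_mul hNx hwp hc (f xk z) (x s - xk).
  by rewrite expr2 mulrDl -mulrA -/z -/F; lra.
have := dini_comparison (@sol_norm_continuous xk k) gd ht.
by rewrite /= subrr (is_norm0 hNx) mulr0 add0r mulrC.
Qed.

Lemma zstar_gap_le k s : k%:R * T <= s <= k%:R * T + T ->
  Nz (zs k.+1 - zstar (x s)) <= Nz (zs k.+1 - zstar (x (k%:R * T))) +
     Kz L a * expint xi T * Nx (f (x (k%:R * T)) (zs k.+1)).
Proof.
move=> hs; have /andP[s1 s2] := hs.
have Xs : X (x s) by apply: sol_X; apply: le_trans (sample_time_ge0 k) s1.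
have Xk : X (x (k%:R * T)) by apply: sol_X; exact: sample_time_ge0.
apply: le_trans (is_normB_tri hNz _ (zstar (x (k%:R * T))) _) _.
rewrite lerD2l; apply: le_trans (zstar_lip Xk Xs) _.
rewrite -mulrA ler_wpM2l ?Kz_ge0 // (is_normBC hNx) [expint _ _ * _]mulrC.
apply: le_trans (sol_drift_le hs) _.
by rewrite ler_wpM2l ?is_norm_ge0 // expint_le //; lra.
Qed.

Lemma sol_state_le k t : k%:R * T <= t <= k%:R * T + T ->
  Nx (x t) <= expR (- zeta * (t - k%:R * T)) * Nx (x (k%:R * T)) +
   (b * Nz (zs k.+1 - zstar (x (k%:R * T))) +
    Kf L a b * expint xi T * Nx (f (x (k%:R * T)) (zs k.+1))) *
   expint (- zeta) (t - k%:R * T).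
Proof.
set tk := k%:R * T; set xk := x tk; set z := zs k.+1; set F := Nx (f xk z).
set E := Nz (z - zstar xk); set mu := b * E + Kf L a b * expint xi T * F => ht.
have mu0 : 0 <= mu.
  have := is_norm_ge0 hNz (z - zstar xk); have := is_norm_ge0 hNx (f xk z).
  have := mulr_ge0 Kf_ge0 (expint_ge0 xi (ltW T_gt0)); have := b_ge0.
  rewrite /mu /E /F; nra.
have gd : left_dini_le (fun t => Nx (x t - 0)) tk (tk + T) (- zeta) mu.
  move=> s /andP[s1 s2].
  have Xs : X (x s) by apply: sol_X; apply: le_trans (sample_time_ge0 k) (ltW s1).
  have [Zs _] := zstarP Xs.
  have ds : is_derive s 1 x (f (x s) z) by apply: sol_derive; rewrite s1 s2.
  apply: (is_norm_traj_left_dini hNx hwp hc ds mu0).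
  (* Split off the field of the reduced system, which is [zeta]-contracting. *)
  have -> : f (x s) z = (f (x s) (zstar (x s)) - f 0 (zstar 0)) +
      (f (x s) z - f (x s) (zstar (x s))) by rewrite zstar0 f00 subr0 addrC subrK.
  apply: le_trans (wpD hwp _ _ _) _.
  have := f_zstar_oslip Xs X0.
  have := wp_le_mul hNx hwp hc (f (x s) z - f (x s) (zstar (x s))) (x s - 0).
  have fz : Nx (f (x s) z - f (x s) (zstar (x s))) <= mu.
    apply: le_trans (f_lip_z Xs (sol_Z k.+1) Zs) _.
    have := ler_wpM2l b_ge0 (@zstar_gap_le k s (ltac:(by rewrite !ltW))).
    by rewrite /mu Kf_Kz -/z -/xk -/F -/E; lra.
  have := ler_wpM2r (is_norm_ge0 hNx (x s - 0)) fz.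
  by rewrite expr2 /mu; lra.
have := dini_comparison (@sol_norm_continuous 0 k) gd ht.
by rewrite /= !subr0.
Qed.

Lemma sol_gap_next_le k :
  Nz (zs k.+2 - zstar (x (k.+1%:R * T))) <= L ^+ n *
    (Nz (zs k.+1 - zstar (x (k%:R * T))) +
     Kz L a * expint xi T * Nx (f (x (k%:R * T)) (zs k.+1))).
Proof.
rewrite sol_zs; have X1 : X (x (k.+1%:R * T)) by apply: sol_X; exact: sample_time_ge0.
apply: le_trans (Giter_contract n X1 (sol_Z k.+1)) _.
rewrite ler_wpM2l ?exprn_ge0 // sample_timeS; apply: zstar_gap_le.
by rewrite lerDl lexx ltW.
Qed.

Definition xsample k := Nx (x (k%:R * T)).
Definition zgap k := Nz (zs k.+1 - zstar (x (k%:R * T))).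

Lemma f_sample_le k : Nx (f (x (k%:R * T)) (zs k.+1)) <= b * zgap k + (c + Kf L a b) * xsample k.
Proof. by apply: f_norm_le; [apply: sol_X; exact: sample_time_ge0 | exact: sol_Z]. Qed.

Lemma xsample_step k : xsample k.+1 <= m11 * xsample k + m12 * zgap k.
Proof.
have := sol_state_le (t := k%:R * T + T) (k := k) (ltac:(by rewrite lexx lerDl ltW)).
rewrite (_ : k%:R * T + T - k%:R * T = T); last by rewrite addrAC subrr add0r.
rewrite -sample_timeS -/(xsample k.+1) -/(xsample k) -/(zgap k).
have := ler_wpM2l (mulr_ge0 Kf_ge0 (expint_ge0 xi (ltW T_gt0))) (f_sample_le k).
have := expint_ge0 (- zeta) (ltW T_gt0).
set F := Nx _; set Om := expint (- zeta) T => Om0 hF H; apply: le_trans H _.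
have := ler_wpM2r Om0 (lerD (lexx (b * zgap k)) hF).
by rewrite /m11 /m12 -/Om; lra.
Qed.

Lemma zgap_step k : zgap k.+1 <= m21 * xsample k + m22 * zgap k.
Proof.
apply: le_trans (sol_gap_next_le k) _.
have := ler_wpM2l (mulr_ge0 Kz_ge0 (expint_ge0 xi (ltW T_gt0))) (f_sample_le k).
have Ln : 0 <= L ^+ n by rewrite exprn_ge0.
move=> hF; have := ler_wpM2l Ln (lerD (lexx (zgap k)) hF).
by rewrite /m21 /m22 -/(zgap k); lra.
Qed.
Lemma xsample_ge0 k : 0 <= xsample k. Proof. exact: is_norm_ge0. Qed.
Lemma zgap_ge0 k : 0 <= zgap k. Proof. exact: is_norm_ge0. Qed.

Lemma sol_state_interval_le k t : k%:R * T <= t <= k%:R * T + T ->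
  Nx (x t) <= xsample k +
    (b * zgap k + Kf L a b * expint xi T * (b * zgap k + (c + Kf L a b) * xsample k)) / zeta.
Proof.
move=> ht; have /andP[t1 _] := ht; apply: le_trans (sol_state_le ht) _.
rewrite -/(xsample k) -/(zgap k).
set F := Nx _; set mu := b * zgap k + _ * F.
have K0 : 0 <= Kf L a b * expint xi T by rewrite mulr_ge0 ?Kf_ge0 ?expint_ge0 // ltW.
have mu0 : 0 <= mu.
  by apply: addr_ge0; [exact: mulr_ge0 b_ge0 (zgap_ge0 k) | exact: mulr_ge0 K0 (is_norm_ge0 hNx _)].
have e1 : expR (- zeta * (t - k%:R * T)) <= 1.
  by rewrite expR_le1 mulNr oppr_le0 mulr_ge0 ?subr_ge0 // ltW.
have om1 := expintN_le (t - k%:R * T) zeta_gt0.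
have muF : mu <= b * zgap k + Kf L a b * expint xi T * (b * zgap k + (c + Kf L a b) * xsample k).
  by rewrite lerD2l ler_wpM2l // f_sample_le.
apply: lerD; first by rewrite -[leRHS]mul1r ler_wpM2r ?xsample_ge0.
apply: le_trans (ler_wpM2l mu0 om1) _.
by rewrite ler_wpM2r // invr_ge0 ltW.
Qed.

Lemma zs_le k : Nz (zs k.+1) <= zgap k + Kz L a * xsample k.
Proof.
have Xk : X (x (k%:R * T)) by apply: sol_X; exact: sample_time_ge0.
have := zstar_lip Xk X0; rewrite zstar0 !subr0 => zs_lip.
rewrite -[zs k.+1]subr0; apply: le_trans (is_normB_tri hNz _ (zstar (x (k%:R * T))) _) _.
by rewrite lerD2l subr0.
Qed.
Lemma initial_le : 0 < sample_weight ->
  xsample 0 + sample_weight * zgap 0 <= initial_gain * (Nx (x 0) + Nz (zs 1%N)).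
Proof.
move=> q0; rewrite /xsample /zgap mul0r.
have gap0 : Nz (zs 1%N - zstar (x 0)) <= Nz (zs 1%N) + Kz L a * Nx (x 0).
  rewrite -{2}[zs 1%N]subr0; apply: le_trans (is_normB_tri hNz _ 0 _) _.
  rewrite lerD2l -(is_normN hNz) opprB subr0; have := zstar_lip (sol_X (lexx 0)) X0.
  by rewrite zstar0 !subr0.
have := ler_wpM2l (ltW q0) gap0.
have : 1 + sample_weight * Kz L a <= initial_gain by rewrite le_max lexx.
have : sample_weight <= initial_gain by rewrite le_max lexx orbT.
have := is_norm_ge0 hNx (x 0); have := is_norm_ge0 hNz (zs 1%N); nra.
Qed.

Lemma interval_state_le k t : k%:R * T <= t <= k%:R * T + T -> 0 < sample_weight ->
  Nx (x t) + Nz (zs k.+1) <= interval_gain * (xsample k + sample_weight * zgap k).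
Proof.
move=> ht q0.
have [P1 P2] : 1 + Kf L a b * expint xi T * (c + Kf L a b) / zeta + Kz L a <= interval_gain
    /\ (b + Kf L a b * expint xi T * b) / zeta + 1 <= interval_gain * sample_weight.
  by split; [rewrite le_max lexx | rewrite -ler_pdivrMr // le_max lexx orbT].
have := sol_state_interval_le ht; have := zs_le k.
have := ler_wpM2r (xsample_ge0 k) P1; have := ler_wpM2r (zgap_ge0 k) P2.
lra.
Qed.


Section SolutionDecay.
Hypothesis sampling_cond :
  expint xi T * (C2 L a b n + C1 L a b c / zeta) < 1 - L ^+ n.

Lemma sample_decay k : xsample k + sample_weight * zgap k <=
  sample_rate ^+ k * (xsample 0 + sample_weight * zgap 0).
Proof.
have [h12 h21] := gain_matrix_offdiag_ge0.
have [l11 l22 det] := gain_matrix_stable sampling_cond.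
exact: two_dim_decay xsample_ge0 zgap_ge0 xsample_step zgap_step k.
Qed.

Lemma solution_exp_bound k t : k%:R * T <= t < k.+1%:R * T ->
  wnorm2 1 1 (Nx (x t)) (Nz (zs k.+1)) <=
    overshoot * expR (- decay_exponent * t) * wnorm2 1 1 (Nx (x 0)) (Nz (zs 1%N)).
Proof.
move=> /andP[tk1 tk2].
have [q0 r0 r1] := sample_decay_consts sampling_cond.
have P0 : 0 <= interval_gain by apply: le_trans ler01 interval_gain_ge1.
set V0 := xsample 0 + sample_weight * zgap 0.
have V0_ge0 : 0 <= V0 by rewrite addr_ge0 ?xsample_ge0 // mulr_ge0 ?zgap_ge0 // ltW.
have rate_exp : sample_rate ^+ k <= expR (- decay_exponent * t) / sample_rate.
  rewrite (_ : - decay_exponent * t = ln sample_rate * (t / T)).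
    by apply: expr_le_expR_ln; rewrite ?r0.
  by rewrite /decay_exponent; field; rewrite lt0r_neq0.
have exp_ge0 : 0 <= expR (- decay_exponent * t) / sample_rate.
  by rewrite divr_ge0 ?expR_ge0 // ltW.
apply: le_trans (wnorm2_le_add (is_norm_ge0 hNx _) (is_norm_ge0 hNz _)) _.
have ht : k%:R * T <= t <= k%:R * T + T by rewrite tk1 -sample_timeS ltW.
apply: le_trans (interval_state_le ht q0) _.
apply: le_trans (ler_wpM2l P0 (sample_decay k)) _.
apply: le_trans (ler_wpM2l P0 (ler_wpM2r V0_ge0 rate_exp)) _.
apply: le_trans (ler_wpM2l P0 (ler_wpM2l exp_ge0 (initial_le q0))) _.
have := add_le_wnorm2 (is_norm_ge0 hNx (x 0)) (is_norm_ge0 hNz (zs 1%N)).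
move/(ler_wpM2l (ltW (initial_gain_gt0 sampling_cond)))/(ler_wpM2l exp_ge0).
move/(ler_wpM2l P0) => H; apply: le_trans H _.
rewrite /overshoot le_eqVlt; apply/orP; left; apply/eqP; field; exact: lt0r_neq0.
Qed.
End SolutionDecay.
End Solution.

End Sampling.
End Interconnection.

Unset Implicit Arguments. Set Strict Implicit.
Theorem theorem3 (R : realType) (nx nz : nat)
  (Nx : 'rV[R]_nx -> R) (Nz : 'rV[R]_nz -> R)
  (X : set 'rV[R]_nx) (Z : set 'rV[R]_nz)
  (f : 'rV[R]_nx -> 'rV[R]_nz -> 'rV[R]_nx) (G : 'rV[R]_nx -> 'rV[R]_nz -> 'rV[R]_nz)
  (wp : 'rV[R]_nx -> 'rV[R]_nx -> R) (zstar : 'rV[R]_nx -> 'rV[R]_nz)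
  (xi zeta : R) :
  is_norm Nx -> is_norm Nz ->
  convex_set X -> convex_set Z ->
  {within X `*` Z, continuous (fun p : 'rV[R]_nx * 'rV[R]_nz => f p.1 p.2)} ->
  {within X `*` Z, continuous (fun p : 'rV[R]_nx * 'rV[R]_nz => G p.1 p.2)} ->
  (forall x z, X x -> Z z -> Z (G x z)) ->
  X 0 -> Z 0 -> f 0 0 = 0 -> G 0 0 = 0 ->
  is_weak_pairing wp -> wp_compatible wp Nx ->
  (* (A1) *) (Lip_fst X Z Nx Nx f < +oo)%E ->
  (* (A2) *) (0%:E < Lip_snd X Z Nz Nx f < +oo)%E ->
             (0%:E < Lip_fst X Z Nx Nz G < +oo)%E ->
  (* (A3) *) (Lip_snd X Z Nz Nz G < 1%:E)%E ->
  (* z*(x) is the fixed point of z |-> G(x, z) in Z *)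
  (forall x, X x -> Z (zstar x) /\ G x (zstar x) = zstar x) ->
  (osLip_fst X Z wp Nx f <= xi%:E)%E ->
  0 < zeta ->
  (osLip X wp Nx (fun x => f x (zstar x)) <= (- zeta)%:E)%E ->
  let LzG := fine (Lip_snd X Z Nz Nz G) in
  let LxG := fine (Lip_fst X Z Nx Nz G) in
  let Lzf := fine (Lip_snd X Z Nz Nx f) in
  let Lxf := fine (Lip_fst X Z Nx Nx f) in
  forall n : nat, (0 < n)%N ->
    (0%:E < Tbound LzG LxG Lzf Lxf xi zeta n)%E /\
    forall T : R, 0 < T -> (T%:E < Tbound LzG LxG Lzf Lxf xi zeta n)%E ->
      exists eta1 eta2 rho alpha : R,
        [/\ 0 < eta1, 0 < eta2, 0 < rho, 0 < alpha &
          forall (x : R -> 'rV[R]_nx) (zs : nat -> 'rV[R]_nz),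
            is_solution X Z f G n T x zs ->
            forall (k : nat) (t : R), 0 <= t -> k%:R * T <= t < k.+1%:R * T ->
              wnorm2 eta1 eta2 (Nx (x t)) (Nz (zs k.+1))
                <= rho * expR (- alpha * t) * wnorm2 eta1 eta2 (Nx (x 0)) (Nz (zs 1%N))].
Proof.
move=> hNx hNz _ _ _ _ GZ X0 Z0 f00 G00 hwp hc Lxf_fin /andP[Lzf_gt0 Lzf_fin]
  /andP[LxG_gt0 LxG_fin] LzG_lt1 zstarP xi_ge zeta_gt0 zeta_le LzG LxG Lzf Lxf n n_gt0.
have LzG_fin : (Lip_snd X Z Nz Nz G < +oo)%E by exact: lt_trans LzG_lt1 (ltey _).
have L_ge0 : 0 <= LzG by exact: Lip_snd_ge0.
have L_lt1 : LzG < 1 by exact: fine_lt1.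
have a_gt0 : 0 < LxG by rewrite fine_gt0 // LxG_gt0.
have b_gt0 : 0 < Lzf by rewrite fine_gt0 // Lzf_gt0.
have c_ge0 : 0 <= Lxf by exact: Lip_fst_ge0.
split=> [|T T_gt0 T_lt]; first exact: Tbound_gt0.
have cond := sampling_cond_of_Tbound L_ge0 L_lt1 a_gt0 b_gt0 c_ge0 zeta_gt0 n_gt0 T_gt0 T_lt.
have [a_ge0 b_ge0] := (ltW a_gt0, ltW b_gt0).
exists 1, 1, (overshoot xi zeta LzG LxG Lzf Lxf n T),
  (decay_exponent xi zeta LzG LxG Lzf Lxf n T); split=> //.
- exact: overshoot_gt0 cond.
- exact: decay_exponent_gt0 cond.
move=> x zs hsol k t _.
exact: (solution_exp_bound hNx hNz hwp hc X0 Z0 f00 G00 GZ zstarP L_ge0 L_lt1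
  a_ge0 b_ge0 c_ge0 zeta_gt0
  (fun _ _ _ => Lip_snd_le hNz hNz LzG_fin) (fun _ _ _ => Lip_fst_le hNx hNz LxG_fin)
  (fun _ _ _ => Lip_snd_le hNz hNx Lzf_fin) (fun _ _ _ => Lip_fst_le hNx hNx Lxf_fin)
  (fun _ _ _ => osLip_fst_le hNx hwp xi_ge) (fun _ _ => osLip_le hNx hwp zeta_le)
  T_gt0 hsol cond).
Qed.
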